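(* Let $K$ be a field of characteristic $0$ or $>n$ and $P=K[v_1,\dots,v_n]$. Let $p\in P$ be a monomial and write $p=v_1^rv$ with $v$ a monomial not divisible by $v_1$. Then every Artin monomial occurring (with nonzero coefficient) in the Artin reduction of $p$ has $v_1$-exponent at least $r$.
   Context: Let $e_1,\dots,e_n$ be the elementary symmetric polynomials in $v_1,\dots,v_n$. An Artin monomial is $v_1^{l_1}\cdots v_n^{l_n}$ with $0\le l_i\le n-i$ for all $i$; the Artin monomials form a $K$-basis of $P/(e_1,\dots,e_n)$. The Artin reduction of $p\in P$ is the unique $K$-linear combination $p'$ of Artin monomials with $p\equiv p'$ modulo $(e_1,\dots,e_n)$. *)

From HB Require Import structures.
From mathcomp Require Import all_boot all_order all_algebra.
From mathcomp Require Import mpoly.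
Set Implicit Arguments. Unset Strict Implicit. Unset Printing Implicit Defensive.
Import GRing.Theory.
Local Open Scope ring_scope.

(* Variables v_1..v_n are indexed by i : 'I_n (0-based), so v_{i+1} = 'X_i. *)

Definition artin_monomial (n : nat) (m : 'X_{1..n}) : bool :=
  [forall i : 'I_n, (m i <= n - i.+1)%N].

Definition artin_combination (n : nat) (K : fieldType) (p : {mpoly K[n]}) : Prop :=
  forall m : 'X_{1..n}, p@_m != 0 -> artin_monomial m.

Definition in_esym_ideal (n : nat) (K : fieldType) (p : {mpoly K[n]}) : Prop :=
  exists q : 'I_n -> {mpoly K[n]}, p = \sum_(i < n) q i * mesym n K i.+1.

(* p' is the Artin reduction of p: an Artin combination with p = p' mod (e_1..e_n)
   (unique, since Artin monomials form a basis of P/(e_1..e_n)). *)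
Definition artin_reduction_of (n : nat) (K : fieldType) (p p' : {mpoly K[n]}) : Prop :=
  artin_combination p' /\ in_esym_ideal (p - p').

From HB Require Import structures.
From mathcomp Require Import all_boot all_order all_algebra.
From mathcomp Require Import mpoly.
Set Implicit Arguments. Unset Strict Implicit. Unset Printing Implicit Defensive.
Import GRing.Theory Pdiv.Ring Pdiv.RingMonic.
Local Open Scope ring_scope.

(* For [f] monic of degree [n] over a commutative ring, let [I_f] be the ideal
   generated by the coefficients of [prod_i (X - v_i) - f(X)]; by Viete,
   [I_(X^n) = (e_1, ..., e_n)].
   Existence: over [R[v_1]], [f(X) - f(v_1) = (X - v_1) g(X)] with [g] monic of
   degree [n - 1], and both [I_g] and [f(v_1)] lie in [I_f].  Hence
   [v_1^r v = v_1^r r'] modulo [I_f], where [r'] reduces [v] over [R[v_1]] modulo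
   [I_g] (induction on [n]); reducing the [v_1]-coefficients of [v_1^r r'] modulo
   [f] then yields an Artin combination.  For [f = X^n] this last reduction is a
   truncation, which creates no [v_1]-exponent below [r].
   Uniqueness: in [R[t]/(f)] the polynomial [f] acquires the root [t] with a
   cofactor [q]; sending [v_1] to [t] maps [I_f] into [I_q] and is injective on
   Artin combinations, whose [v_1]-degree is below [deg f].  By induction, [I_f]
   contains no nonzero Artin combination. *)

Section CoefIdeal.
Variable A : comNzRingType.
Implicit Types (P Q G H : {poly A}) (a c x y : A).

Definition in_coef_ideal P x := exists u : nat -> A, x = \sum_(k < size P) u k * P`_k.

Lemma in_coef_ideal0 P : in_coef_ideal P 0.
Proof. by exists (fun=> 0); rewrite big1 // => k _; rewrite mul0r. Qed.

Lemma in_coef_idealD P x y :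
  in_coef_ideal P x -> in_coef_ideal P y -> in_coef_ideal P (x + y).
Proof.
move=> [u ->] [v ->]; exists (fun k => u k + v k).
by rewrite -big_split; apply: eq_bigr => k _; rewrite mulrDl.
Qed.

Lemma in_coef_idealN P x : in_coef_ideal P x -> in_coef_ideal P (- x).
Proof.
move=> [u ->]; exists (fun k => - u k).
by rewrite -sumrN; apply: eq_bigr => k _; rewrite mulNr.
Qed.

Lemma in_coef_idealB P x y :
  in_coef_ideal P x -> in_coef_ideal P y -> in_coef_ideal P (x - y).
Proof. by move=> Px Py; apply/in_coef_idealD/in_coef_idealN. Qed.

Lemma in_coef_idealMl P y x : in_coef_ideal P x -> in_coef_ideal P (y * x).
Proof.
move=> [u ->]; exists (fun k => y * u k).
by rewrite mulr_sumr; apply: eq_bigr => k _; rewrite mulrA.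
Qed.

Lemma in_coef_idealMr P y x : in_coef_ideal P x -> in_coef_ideal P (x * y).
Proof. by rewrite mulrC; apply: in_coef_idealMl. Qed.

Lemma in_coef_ideal_sum P (I : Type) (r : seq I) (B : pred I) (F : I -> A) :
  (forall i, B i -> in_coef_ideal P (F i)) ->
  in_coef_ideal P (\sum_(i <- r | B i) F i).
Proof.
move=> PF; elim/big_rec: _ => [|i x Bi Px]; first exact: in_coef_ideal0.
exact/in_coef_idealD/Px/PF.
Qed.

Lemma coef_in_coef_ideal P k : in_coef_ideal P P`_k.
Proof.
have [kP|/leq_sizeP -> //] := ltnP k (size P); last exact: in_coef_ideal0.
exists (fun j => (j == k)%:R).
rewrite (bigD1 (Ordinal kP)) //= eqxx mul1r big1 ?addr0 // => j.
by rewrite -val_eqE /= => /negbTE ->; rewrite mul0r.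
Qed.

Lemma coefM_in_coef_ideal Q P k : in_coef_ideal P (Q * P)`_k.
Proof.
rewrite coefM; apply: in_coef_ideal_sum => i _.
exact/in_coef_idealMl/coef_in_coef_ideal.
Qed.

(* Division by [X - a] computes the coefficients of [G] downwards from the top,
   [G_k = H_(k+1) + a G_(k+1)]; the constant coefficient then yields [c]. *)
Lemma in_coef_ideal_divXsubC a G H c : ('X - a%:P) * G = H + c%:P ->
  (forall k, in_coef_ideal H G`_k) /\ in_coef_ideal H c.
Proof.
move=> eG.
have coefG k : G`_k = H`_k.+1 + a * G`_k.+1.
  have := congr1 (fun P => P`_k.+1) eG.
  by rewrite /= mulrBl coefB coefXM coefCM coefD coefC addr0 => <-; rewrite subrK.
have HG t k : (size G <= k + t)%N -> in_coef_ideal H G`_k.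
  elim: t k => [|t IHt] k; first by rewrite addn0 => /leq_sizeP ->; [exact: in_coef_ideal0|].
  move=> Gk; rewrite coefG; apply/in_coef_idealD/in_coef_idealMl/IHt.
    exact: coef_in_coef_ideal.
  by rewrite addSnnS.
have {}HG k : in_coef_ideal H G`_k by apply: (HG (size G)); rewrite leq_addl.
split=> //; have := congr1 (fun P => P`_0) eG.
rewrite /= mulrBl coefB coefXM coefCM coefD coefC /= sub0r => eG0.
have -> : c = - (a * G`_0) - H`_0 by rewrite eG0 addrC addKr.
exact/in_coef_idealB/coef_in_coef_ideal/in_coef_idealN/in_coef_idealMl.
Qed.

End CoefIdeal.

Lemma in_coef_ideal_rmorph (A B : comNzRingType) (phi : {rmorphism A -> B})
    (P : {poly A}) (Q : {poly B}) x :
  (forall k, in_coef_ideal Q (map_poly phi P)`_k) -> in_coef_ideal P x ->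
  in_coef_ideal Q (phi x).
Proof.
move=> PQ [u ->]; rewrite rmorph_sum; apply: in_coef_ideal_sum => k _.
by rewrite rmorphM -coef_map; exact/in_coef_idealMl.
Qed.

Lemma monic_factor_XsubC (A : comNzRingType) (P : {poly A}) a k :
  P \is monic -> size P = k.+2 -> root P a ->
  exists q : {poly A}, [/\ q \is monic, size q = k.+1 & P = q * ('X - a%:P)].
Proof.
move=> Pmonic Psize /factor_theorem[q Pq]; exists q.
have qmonic : q \is monic.
  by rewrite monicE -(lead_coef_Mmonic q (monicXsubC a)) -Pq -monicE.
split=> //; apply: succn_inj; apply: succn_inj.
by rewrite -Psize Pq size_Mmonic ?monic_neq0 ?monicXsubC // size_XsubC addn2.
Qed.

Lemma factor_map_polyC_subC (R : comNzRingType) (f : {poly R}) k :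
  f \is monic -> size f = k.+2 ->
  exists qq : {poly {poly R}},
    [/\ qq \is monic, size qq = k.+1 & map_poly polyC f - f%:P = qq * ('X - 'X%:P)].
Proof.
move=> f_monic f_size; have fC_size : size (map_poly polyC f) = k.+2.
  by rewrite size_map_polyC.
have small_fP : (size (- f%:P) < size (map_poly polyC f))%N.
  by rewrite size_polyN size_polyC fC_size; case: (f != 0).
apply: monic_factor_XsubC.
- rewrite monicE lead_coefDl // lead_coefE fC_size coef_map /=.
  by rewrite -[k.+1]/(k.+2.-1) -f_size -lead_coefE (eqP f_monic).
- by rewrite size_polyDl.
by apply/rootP; rewrite hornerD hornerN hornerC -/(comp_poly 'X f) comp_polyXr subrr.
Qed.

Section GenericPoly.
Variable R : comNzRingType.

Definition generic_poly n : {poly {mpoly R[n]}} := \prod_(i < n) ('X - ('X_i)%:P).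

Definition roots_rel n (f : {poly R}) : {poly {mpoly R[n]}} :=
  generic_poly n - map_poly (@mpolyC n R) f.

Lemma map_generic_poly n (B : comNzRingType) (g : {rmorphism {mpoly R[n]} -> B}) :
  map_poly g (generic_poly n) = \prod_(i < n) ('X - (g 'X_i)%:P).
Proof. by rewrite rmorph_prod /=; apply: eq_bigr => i _; rewrite map_polyXsubC. Qed.

Lemma roots_rel0 (f : {poly R}) : f \is monic -> size f = 1%N -> roots_rel 0 f = 0.
Proof.
move=> fmonic fsize; rewrite /roots_rel /generic_poly big_ord0.
have f0 : f`_0 = 1 by rewrite -(eqP fmonic) lead_coefE fsize.
have -> : f = 1 by rewrite [f]size1_polyC ?fsize // f0.
by rewrite rmorph1 subrr.
Qed.

(* Viete's formulas, transported from the integer polynomials of [mpoly]. *)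
Lemma coef_generic_poly n k : (k <= n)%N ->
  (generic_poly n)`_(n - k) = (-1) ^+ k * mesym n R k.
Proof.
move=> kn.
have Viete_R : generic_poly n =
    \sum_(j < n.+1) (-1) ^+ j *: (mesym n R j *: 'X^(n - j)).
  have mesym_int j : map_mpoly intr (mesym n int j) = mesym n R j.
    by apply/mpolyP => m; rewrite mcoeff_map_mpoly !mcoeff_mesym /= rmorph_nat.
  rewrite /generic_poly; have := congr1 (map_poly (map_mpoly (intr : int -> R))) (Viete n).
  rewrite rmorph_prod /= (eq_bigr (fun i => 'X - ('X_i)%:P)) => [->|i _]; last first.
    by rewrite map_polyXsubC /= map_mpolyX.
  rewrite raddf_sum /=; apply: eq_bigr => j _.
  by rewrite !map_polyZ map_polyXn /= rmorphXn rmorphN1 mesym_int.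
rewrite Viete_R coef_sum (bigD1 (Ordinal (kn : k < n.+1)%N)) //=.
rewrite !coefZ coefXn eqxx mulr1 big1 ?addr0 // => j /negbTE jk.
rewrite !coefZ coefXn.
have /negbTE -> : (n - k != n - j)%N; last by rewrite !mulr0.
apply: contraFN jk => /eqP/esym/(congr1 (subn n)).
have jn : (j <= n)%N := ltn_ord j.
by rewrite !subKn // => jk; apply/eqP/val_inj.
Qed.

End GenericPoly.

Lemma in_esym_ideal_roots_rel (K : fieldType) n (p : {mpoly K[n]}) :
  in_esym_ideal p -> in_coef_ideal (roots_rel n 'X^n) p.
Proof.
case=> q ->; apply: in_coef_ideal_sum => i _; apply: in_coef_idealMl.
have le_in : (i.+1 <= n)%N := ltn_ord i.
have -> : mesym n K i.+1 = (-1) ^+ i.+1 * (roots_rel n 'X^n)`_(n - i.+1) :> {mpoly K[n]}.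
  rewrite coefB coef_generic_poly // coef_map /= coefXn.
  have /negbTE -> : (n - i.+1 != n)%N by rewrite neq_ltn ltn_subrL (leq_trans _ le_in).
  rewrite rmorph0 subr0.
  by rewrite mulrA -exprD -signr_odd addnn odd_double expr0 mul1r.
exact/in_coef_idealMl/coef_in_coef_ideal.
Qed.

Definition artin_supported (R : nzRingType) n (p : {mpoly R[n]}) : Prop :=
  forall m, p@_m != 0 -> artin_monomial m.

Lemma artin_supportedB (R : nzRingType) n (p q : {mpoly R[n]}) :
  artin_supported p -> artin_supported q -> artin_supported (p - q).
Proof.
move=> artin_p artin_q m; rewrite mcoeffB.
have [/artin_p //|/negbNE/eqP ->] := boolP (p@_m != 0).
by rewrite sub0r oppr_eq0 => /artin_q.
Qed.

Section MnmCons.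
Variable n : nat.
Implicit Types (m : 'X_{1..n}) (mm : 'X_{1..n.+1}).

Definition mnm_cons (j : nat) m : 'X_{1..n.+1} :=
  [multinom (if unlift ord0 i is Some k then m k else j) | i < n.+1].

Definition mnm_tail mm : 'X_{1..n} := [multinom mm (lift ord0 k) | k < n].

Lemma mnm_cons0 j m : mnm_cons j m ord0 = j.
Proof. by rewrite mnmE unlift_none. Qed.

Lemma mnm_consS j m k : mnm_cons j m (lift ord0 k) = m k.
Proof. by rewrite mnmE liftK. Qed.

Lemma mnm_tailE mm k : mnm_tail mm k = mm (lift ord0 k).
Proof. by rewrite mnmE. Qed.

Lemma mnm_cons_tail mm : mnm_cons (mm ord0) (mnm_tail mm) = mm.
Proof.
apply/mnmP => i; rewrite mnmE; case: unliftP => [k ->|->] //.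
by rewrite mnm_tailE.
Qed.

Lemma mnm_tail_cons j m : mnm_tail (mnm_cons j m) = m.
Proof. by apply/mnmP => k; rewrite mnm_tailE mnm_consS. Qed.

Lemma eq_mnm_cons i j m m' :
  (mnm_cons i m == mnm_cons j m') = (i == j) && (m == m').
Proof.
apply/eqP/andP => [e|[/eqP -> /eqP ->] //]; split; apply/eqP.
  by rewrite -(mnm_cons0 i m) e mnm_cons0.
by rewrite -(mnm_tail_cons i m) e mnm_tail_cons.
Qed.

Lemma mnm_consE j m : mnm_cons j m = (U_(ord0) *+ j + mnm_cons 0 m)%MM.
Proof.
apply/mnmP => i; rewrite mnmDE mulmnE mnm1E !mnmE.
case: unliftP => [k ->|->]; first by rewrite (negbTE (neq_lift _ _)).
by rewrite eqxx mul1n addn0.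
Qed.

Lemma artin_monomial_cons j m :
  artin_monomial (mnm_cons j m) = (j <= n)%N && artin_monomial m.
Proof.
apply/forallP/andP => [artin_jm|[jn /forallP artin_m] i].
  split; first by have := artin_jm ord0; rewrite mnm_cons0 subn1.
  by apply/forallP => k; have := artin_jm (lift ord0 k); rewrite mnm_consS.
case: (unliftP ord0 i) => [k ->|->]; first by rewrite mnm_consS; exact: artin_m.
by rewrite mnm_cons0 subn1.
Qed.

End MnmCons.

Section Flatten.
Variables (R : comNzRingType) (n : nat).
Implicit Types (c : {poly R}) (r : {mpoly {poly R}[n]}) (p : {mpoly R[n.+1]}).

(* [mflatten] identifies [R[t][v_2, ..., v_(n+1)]] with [R[v_1, ..., v_(n+1)]]
   through [t |-> v_1], and [mcurry] is its inverse.  They are plain functions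
   with a copied morphism structure, so that [/=] does not unfold them. *)
Definition evalX0 (c : {poly R}) : {mpoly R[n.+1]} :=
  (map_poly (@mpolyC n.+1 R) c).['X_ord0].
HB.instance Definition _ :=
  GRing.RMorphism.copy evalX0 (horner_eval 'X_ord0 \o map_poly (@mpolyC n.+1 R)).

Definition mflatten (r : {mpoly {poly R}[n]}) : {mpoly R[n.+1]} :=
  mmap evalX0 (fun k => 'X_(lift ord0 k)) r.
HB.instance Definition _ :=
  GRing.RMorphism.copy mflatten (mmap evalX0 (fun k => 'X_(lift ord0 k))).

Definition mcurry_var (i : 'I_n.+1) : {mpoly {poly R}[n]} :=
  if unlift ord0 i is Some k then 'X_k else 'X%:MP.

Definition mcurry (p : {mpoly R[n.+1]}) : {mpoly {poly R}[n]} :=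
  mmap (@mpolyC n {poly R} \o polyC) mcurry_var p.
HB.instance Definition _ :=
  GRing.RMorphism.copy mcurry (mmap (@mpolyC n {poly R} \o polyC) mcurry_var).

Lemma evalX0C a : evalX0 a%:P = a%:MP.
Proof. by rewrite /evalX0 map_polyC hornerC. Qed.

Lemma evalX0X : evalX0 'X = 'X_ord0.
Proof. by rewrite /evalX0 map_polyX hornerX. Qed.

Lemma mflattenC c : mflatten c%:MP = evalX0 c.
Proof. by rewrite /mflatten mmapC. Qed.

Lemma mflattenX m : mflatten 'X_[m] = 'X_[mnm_cons 0 m].
Proof.
rewrite /mflatten mmapX /mmap1 [RHS]mpolyXE_id big_ord_recl mnm_cons0 expr0 mul1r.
by apply: eq_bigr => k _; rewrite mnm_consS.
Qed.

Lemma mflattenXU k : mflatten 'X_k = 'X_(lift ord0 k).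
Proof. by rewrite /mflatten mmapX mmap1U. Qed.

Lemma mflattenE r :
  mflatten r = \sum_(m <- msupp r) evalX0 r@_m * 'X_[mnm_cons 0 m].
Proof. by apply: eq_bigr => m _; rewrite -mflattenX /mflatten mmapX. Qed.

Lemma mflattenCM c r : mflatten (c%:MP * r) = evalX0 c * mflatten r.
Proof. by rewrite -mflattenC rmorphM. Qed.

Lemma evalX0_mulX c m :
  evalX0 c * 'X_[mnm_cons 0 m] = \sum_(i < size c) c`_i *: 'X_[mnm_cons i m].
Proof.
have size_c : (size (map_poly (@mpolyC n.+1 R) c) <= size c)%N by exact: size_poly.
rewrite /evalX0 (horner_coef_wide _ size_c) mulr_suml; apply: eq_bigr => i _.
by rewrite coef_map /= mpolyXn -mulrA -mpolyXD -mnm_consE mul_mpolyC.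
Qed.

Lemma mcoeff_mflatten r j m : (mflatten r)@_(mnm_cons j m) = (r@_m)`_j.
Proof.
rewrite mflattenE [in RHS](mpolyE r) !raddf_sum coef_sum.
apply: eq_bigr => m' _ /=; rewrite evalX0_mulX raddf_sum mcoeffZ mcoeffX /=.
under eq_bigr => i _ do rewrite mcoeffZ mcoeffX eq_mnm_cons.
have [_|_] := eqVneq m' m; last first.
  by rewrite mulr0 coef0 big1 // => i _; rewrite andbF mulr0.
rewrite mulr1 -[in RHS](coefK r@_m') poly_def coef_sum.
by apply: eq_bigr => i _; rewrite andbT coefZ coefXn eq_sym.
Qed.

Lemma mcurryC a : mcurry a%:MP = (a%:P)%:MP.
Proof. by rewrite /mcurry mmapC. Qed.

Lemma mcurryX0 : mcurry 'X_ord0 = 'X%:MP.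
Proof. by rewrite /mcurry mmapX mmap1U /mcurry_var unlift_none. Qed.

Lemma mcurryXS k : mcurry 'X_(lift ord0 k) = 'X_k.
Proof. by rewrite /mcurry mmapX mmap1U /mcurry_var liftK. Qed.

Lemma mflatten_mcurryX (i : 'I_n.+1) : mflatten (mcurry 'X_i) = 'X_i.
Proof.
case: (unliftP ord0 i) => [k ->|->]; first by rewrite mcurryXS mflattenXU.
by rewrite mcurryX0 /mflatten mmapC /= evalX0X.
Qed.

Lemma mflatten_mcurry p : mflatten (mcurry p) = p.
Proof.
rewrite [in LHS](mpolyE p) (rmorph_sum mcurry) (rmorph_sum mflatten).
rewrite [in RHS](mpolyE p); apply: eq_bigr => m _.
rewrite -mul_mpolyC !rmorphM mpolyXE_id !rmorph_prod /=; congr (_ * _).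
  by rewrite mcurryC /mflatten mmapC /= evalX0C.
by apply: eq_bigr => i _; rewrite !rmorphXn /= mflatten_mcurryX.
Qed.

Lemma artin_supported_mflatten r : artin_supported (mflatten r) <->
  artin_supported r /\ (forall m, (size r@_m <= n.+1)%N).
Proof.
split=> [artin_r|[artin_r size_r] mm].
  suff artin_lead m : r@_m != 0 -> artin_monomial (mnm_cons (size r@_m).-1 m).
    split=> m; first by move/artin_lead; rewrite artin_monomial_cons => /andP[].
    have [->|/artin_lead] := eqVneq r@_m 0; first by rewrite size_poly0.
    by rewrite artin_monomial_cons => /andP[le_n _]; rewrite (leq_trans (leqSpred _)).
  by rewrite -lead_coef_eq0 lead_coefE -mcoeff_mflatten => /artin_r.
rewrite -(mnm_cons_tail mm) mcoeff_mflatten artin_monomial_cons => rmm.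
have rm : r@_(mnm_tail mm) != 0 by apply: contraNneq rmm => ->; rewrite coef0.
rewrite artin_r // andbT -ltnS; apply: leq_trans (size_r (mnm_tail mm)).
by apply: contraNT rmm; rewrite -leqNgt => /leq_sizeP ->.
Qed.

End Flatten.

Section ArtinUniqueStep.
Variables (R : comNzRingType) (n : nat) (f : {poly R}).
Hypotheses (f_monic : f \is monic) (f_size : size f = n.+2).

Local Notation S := {poly %/ f}.
Local Notation t := (in_qpoly f 'X).
Local Notation psi := (map_mpoly (in_qpoly f) \o @mcurry R n).

Let mk_monic_f : mk_monic f = f.
Proof. by rewrite /mk_monic f_size f_monic. Qed.

Lemma root_map_qpoly : root (map_poly (in_qpoly f \o polyC) f) t.
Proof.
apply/rootP; rewrite map_poly_comp horner_map -/(comp_poly 'X f) comp_polyXr /=.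
by apply: val_inj; rewrite /= mk_monic_f rmodpp.
Qed.

Variable q : {poly S}.
Hypothesis fq : map_poly (in_qpoly f \o polyC) f = q * ('X - t%:P).

Lemma map_generic_poly_qpoly :
  map_poly psi (generic_poly R n.+1) = ('X - (t%:MP)%:P) * generic_poly S n.
Proof.
rewrite map_generic_poly big_ord_recl /= mcurryX0 map_mpolyC.
by under eq_bigr => k _ do rewrite /= mcurryXS map_mpolyX.
Qed.

Lemma map_polyC_qpoly : map_poly psi (map_poly (@mpolyC n.+1 R) f) =
  ('X - (t%:MP)%:P) * map_poly (@mpolyC n S) q.
Proof.
have -> : map_poly psi (map_poly (@mpolyC n.+1 R) f) =
    map_poly (@mpolyC n S) (map_poly (in_qpoly f \o polyC) f).
  by rewrite -!map_poly_comp; apply: eq_map_poly => a /=; rewrite mcurryC map_mpolyC.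
by rewrite fq rmorphM /= mulrC map_polyXsubC.
Qed.

Lemma map_roots_rel_qpoly :
  map_poly psi (roots_rel n.+1 f) = ('X - (t%:MP)%:P) * roots_rel n q.
Proof. by rewrite mulrBr -map_generic_poly_qpoly -map_polyC_qpoly rmorphB. Qed.

Lemma in_roots_rel_qpoly p :
  in_coef_ideal (roots_rel n.+1 f) p -> in_coef_ideal (roots_rel n q) (psi p).
Proof.
apply: in_coef_ideal_rmorph => k; rewrite map_roots_rel_qpoly.
exact: coefM_in_coef_ideal.
Qed.

Lemma artin_supported_qpoly p :
  artin_supported p -> artin_supported (psi p) /\ (psi p = 0 -> p = 0).
Proof.
rewrite -[p in artin_supported p]mflatten_mcurry.
move=> /artin_supported_mflatten[artin_r size_r].
have coef_psi m : (psi p)@_m = in_qpoly f (mcurry p)@_m by exact: mcoeff_map_mpoly.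
split=> [m|psi0].
  by rewrite coef_psi => nz; apply: artin_r; apply: contraNneq nz => ->; rewrite rmorph0.
rewrite -[p]mflatten_mcurry; suff -> : mcurry p = 0 by rewrite rmorph0.
apply/mpolyP => m; rewrite mcoeff0.
have : in_qpoly f (mcurry p)@_m = 0 by rewrite -coef_psi psi0 mcoeff0.
move/(congr1 (fun x : S => x : {poly R})).
by rewrite in_qpoly_small // mk_monic_f f_size ltnS.
Qed.

End ArtinUniqueStep.

Lemma artin_supported_roots_rel_eq0 n (R : comNzRingType) (f : {poly R})
    (p : {mpoly R[n]}) :
  f \is monic -> size f = n.+1 -> artin_supported p ->
  in_coef_ideal (roots_rel n f) p -> p = 0.
Proof.
elim: n R f p => [|n IHn] R f p f_monic f_size artin_p.
  by rewrite roots_rel0 // => -[u ->]; rewrite size_poly0 big_ord0.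
pose fS := map_poly (in_qpoly f \o polyC) f.
have fS_monic : fS \is monic by exact: monic_map.
have fS_size : size fS = n.+2.
  by rewrite size_map_poly_id0 // /= (eqP f_monic) rmorph1 oner_neq0.
have [q [q_monic q_size fq]] :=
  monic_factor_XsubC fS_monic fS_size (root_map_qpoly f_monic f_size).
have [artin_psi psi_eq0] := artin_supported_qpoly f_monic f_size artin_p.
by move=> /(in_roots_rel_qpoly fq)/(IHn _ _ _ q_monic q_size artin_psi)/psi_eq0.
Qed.

Lemma artin_reduction_unique n (R : comNzRingType) (f : {poly R})
    (x p q : {mpoly R[n]}) :
  f \is monic -> size f = n.+1 -> artin_supported p -> artin_supported q ->
  in_coef_ideal (roots_rel n f) (x - p) -> in_coef_ideal (roots_rel n f) (x - q) ->
  p = q.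
Proof.
move=> f_monic f_size artin_p artin_q red_p red_q; apply/eqP; rewrite -subr_eq0.
apply/eqP/(artin_supported_roots_rel_eq0 f_monic f_size (artin_supportedB _ _)) => //.
have -> : p - q = (x - q) - (x - p) by rewrite opprB [RHS]addrC [RHS]addrA subrK.
exact: in_coef_idealB.
Qed.

Section ArtinReduction.
Variables (R : comNzRingType) (n : nat) (f : {poly R}).
Hypotheses (f_monic : f \is monic) (f_size : size f = n.+2).
Variable qq : {poly {poly R}}.
Hypothesis fqq : map_poly polyC f - f%:P = qq * ('X - 'X%:P).

Lemma map_roots_rel_mflatten :
  ('X - ('X_ord0)%:P) * map_poly (@mflatten R n) (roots_rel n qq) =
  roots_rel n.+1 f + (evalX0 n f)%:P.
Proof.
have gen : map_poly (@mflatten R n) (generic_poly {poly R} n) =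
    \prod_(k < n) ('X - ('X_(lift ord0 k))%:P).
  rewrite map_generic_poly; apply: eq_bigr => k _.
  by congr ('X - _%:P); exact: mflattenXU.
have qqC : map_poly (@mflatten R n) (map_poly (@mpolyC n {poly R}) qq) =
    map_poly (@evalX0 R n) qq.
  by rewrite -map_poly_comp; apply: eq_map_poly => c; exact: mflattenC.
have fX0 : map_poly (@evalX0 R n) (map_poly polyC f - f%:P) =
    map_poly (@mpolyC n.+1 R) f - (evalX0 n f)%:P.
  have -> : map_poly (@mpolyC n.+1 R) f = map_poly (@evalX0 R n) (map_poly polyC f).
    by rewrite -map_poly_comp; apply: eq_map_poly => a; exact/esym/evalX0C.
  by rewrite -(map_polyC (@evalX0 R n)) rmorphB.
have qqX0 : ('X - ('X_ord0)%:P) * map_poly (@evalX0 R n) qq =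
    map_poly (@evalX0 R n) (qq * ('X - 'X%:P)).
  by rewrite -evalX0X -(map_polyXsubC (@evalX0 R n)) mulrC rmorphM.
have -> : roots_rel n.+1 f + (evalX0 n f)%:P =
    generic_poly R n.+1 - map_poly (@evalX0 R n) (map_poly polyC f - f%:P).
  by rewrite fX0 /roots_rel opprB [RHS]addrA [RHS]addrAC.
rewrite fqq -qqX0 -qqC.
rewrite [generic_poly R n.+1]/generic_poly big_ord_recl -gen -mulrBr.
by rewrite rmorphB.
Qed.

Lemma in_roots_rel_mflatten r :
  in_coef_ideal (roots_rel n qq) r -> in_coef_ideal (roots_rel n.+1 f) (mflatten r).
Proof.
apply: in_coef_ideal_rmorph => k.
exact: (in_coef_ideal_divXsubC map_roots_rel_mflatten).1.
Qed.

Lemma evalX0_in_roots_rel : in_coef_ideal (roots_rel n.+1 f) (evalX0 n f).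
Proof. exact: (in_coef_ideal_divXsubC map_roots_rel_mflatten).2. Qed.

Definition rmodf (c : {poly R}) := rmodp c f.

Lemma rmodf_is_zmod_morphism : zmod_morphism rmodf.
Proof. by move=> c d; rewrite /rmodf rmodpB. Qed.

HB.instance Definition _ :=
  GRing.isZmodMorphism.Build {poly R} {poly R} rmodf rmodf_is_zmod_morphism.

Lemma artin_supported_reduce (r : {mpoly {poly R}[n]}) :
  artin_supported r -> artin_supported (mflatten (map_mpoly rmodf r)).
Proof.
move=> artin_r; apply/artin_supported_mflatten; split=> m; rewrite mcoeff_map_mpoly.
  by move=> nz; apply: artin_r; apply: contraNneq nz => ->; rewrite raddf0.
by rewrite -ltnS -f_size ltn_rmodpN0 ?monic_neq0.
Qed.

Lemma in_roots_rel_reduce (r : {mpoly {poly R}[n]}) :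
  in_coef_ideal (roots_rel n.+1 f) (mflatten (r - map_mpoly rmodf r)).
Proof.
rewrite mflattenE; apply: in_coef_ideal_sum => m _; apply: in_coef_idealMr.
rewrite mcoeffB mcoeff_map_mpoly /rmodf {1}(rdivp_eq f_monic r@_m) addrK rmorphM.
exact/in_coef_idealMl/evalX0_in_roots_rel.
Qed.

Definition monomial_reduction (m : 'X_{1..n.+1}) (r : {mpoly {poly R}[n]}) :=
  mflatten (map_mpoly rmodf ('X^(m ord0)%:MP * r)).

Lemma mcoeff_monomial_reduction m r j m' :
  (monomial_reduction m r)@_(mnm_cons j m') = (rmodp ('X^(m ord0) * r@_m') f)`_j.
Proof. by rewrite mcoeff_mflatten mcoeff_map_mpoly mcoeffCM. Qed.

Lemma monomial_reductionP m r : artin_supported r ->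
    in_coef_ideal (roots_rel n qq) ('X_[mnm_tail m] - r) ->
  artin_supported (monomial_reduction m r) /\
  in_coef_ideal (roots_rel n.+1 f) ('X_[m] - monomial_reduction m r).
Proof.
move=> artin_r red_r; split.
  apply: artin_supported_reduce => m'; rewrite mcoeffCM => nz; apply: artin_r.
  by apply: contraNneq nz => ->; rewrite mulr0.
set c : {poly R} := 'X^(m ord0).
have Xm : 'X_[m] = mflatten (c%:MP * 'X_[mnm_tail m]).
  rewrite mflattenCM mflattenX -[in LHS](mnm_cons_tail m) mnm_consE mpolyXD -mpolyXn.
  by rewrite -evalX0X rmorphXn.
have -> : 'X_[m] - monomial_reduction m r = mflatten (c%:MP * ('X_[mnm_tail m] - r))
    + mflatten (c%:MP * r - map_mpoly rmodf (c%:MP * r)).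
  by rewrite Xm -rmorphD mulrBr addrA subrK rmorphB.
apply: in_coef_idealD; last exact: in_roots_rel_reduce.
by rewrite mflattenCM; apply/in_coef_idealMl/in_roots_rel_mflatten.
Qed.

End ArtinReduction.

Lemma exists_artin_reduction n (R : comNzRingType) (f : {poly R}) (m : 'X_{1..n}) :
  f \is monic -> size f = n.+1 ->
  exists2 r, artin_supported r & in_coef_ideal (roots_rel n f) ('X_[m] - r).
Proof.
elim: n R f m => [|n IHn] R f m f_monic f_size.
  exists 'X_[m]; first by move=> m' _; apply/forallP => -[].
  by rewrite subrr; exact: in_coef_ideal0.
have [qq [qq_monic qq_size fqq]] := factor_map_polyC_subC f_monic f_size.
have [r artin_r red_r] := IHn _ qq (mnm_tail m) qq_monic qq_size.
have [] := monomial_reductionP f_monic f_size fqq artin_r red_r.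
by exists (monomial_reduction f m r).
Qed.

Lemma mcoeff_monomial_reduction_Xn_eq0 (R : comNzRingType) n
    (m : 'X_{1..n.+1}) (r : {mpoly {poly R}[n]}) (m' : 'X_{1..n.+1}) :
  (m' ord0 < m ord0)%N -> (monomial_reduction 'X^(n.+1) m r)@_m' = 0.
Proof.
move=> lt_m'm; rewrite -(mnm_cons_tail m') (mcoeff_monomial_reduction (monicXn _ _)).
by rewrite -take_poly_rmodp coef_take_poly coefXnM lt_m'm if_same.
Qed.

Theorem lemma2p7 (K : fieldType) (n : nat) (hn : (0 < n)%N)
    (hchar : forall p : nat, p \in [pchar K] -> (n < p)%N)
    (m : 'X_{1..n}) (p' : {mpoly K[n]}) :
  artin_reduction_of 'X_[m] p' ->
  forall m' : 'X_{1..n}, p'@_m' != 0 -> (m (Ordinal hn) <= m' (Ordinal hn))%N.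
Proof.
case: n hn hchar m p' => // n hn _ m p' [artin_p' red_p'] m'.
have -> : Ordinal hn = ord0 by exact: val_inj.
pose f : {poly K} := 'X^(n.+1).
have f_monic : f \is monic by exact: monicXn.
have f_size : size f = n.+2 by rewrite size_polyXn.
have [qq [qq_monic qq_size fqq]] := factor_map_polyC_subC f_monic f_size.
have [r artin_r red_r] := exists_artin_reduction (mnm_tail m) qq_monic qq_size.
have [artin_red red_m] := monomial_reductionP f_monic f_size fqq artin_r red_r.
have -> : p' = monomial_reduction f m r.
  apply: (artin_reduction_unique f_monic f_size artin_p' artin_red _ red_m).
  exact: in_esym_ideal_roots_rel.
rewrite leqNgt; apply: contraL => /mcoeff_monomial_reduction_Xn_eq0 ->.
by rewrite eqxx.
Qed.
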